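(* For the invertible $N$-component coupled KdV hierarchy (defined in the context), the one-forms $\gamma_s$ are local for all $s\in\mathbf Z$.
   Context: Let $N\ge1$, $\partial=\partial/\partial x$, $\partial^{-1}$ a formal inverse of $\partial$. Let $u_0,\dots,u_{N-1}$ be smooth functions of $(x,t)$, set $u_N=-1$, and let $\varepsilon_1,\dots,\varepsilon_{N-1}$ be real constants, $\varepsilon_0=\varepsilon_N=0$. Put $J_i=\frac14\varepsilon_i\partial^3+\frac12(u_i\partial+\partial u_i)$, so $J_0=\frac12(u_0\partial+\partial u_0)$ and $J_N=-\partial$, both invertible. Formal adjoint: $\partial^\dagger=-\partial$, multiplication operators self-adjoint, $(AB)^\dagger=B^\dagger A^\dagger$, transpose for matrices. Let $R$ be the $N\times N$ matrix operator with $R_{ij}=\delta_{i,j+1}$ ($1\le j\le N-1$) and $R_{iN}=-J_{i-1}J_N^{-1}$; $R$ is invertible. One-forms: $\gamma_0=(0,\dots,0,2)^T$, $\gamma_{-1}=(u_0^{-1/2},0,\dots,0)^T$, and for $s\ge1$, $\gamma_s=(R^\dagger)^s\gamma_0$, $\gamma_{-s}=((R^{-1})^\dagger)^{s-1}\gamma_{-1}$. A one-form is local if each component is a function of $u_0,\dots,u_{N-1}$ and finitely many of their $x$-derivatives (no $\partial^{-1}$ appears). *)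

From HB Require Import structures.
From mathcomp Require Import all_boot all_order all_algebra.
From mathcomp Require Import reals.
Set Implicit Arguments. Unset Strict Implicit. Unset Printing Implicit Defensive.
Import Order.TTheory GRing.Theory Num.Theory.
Local Open Scope ring_scope.

Section KdV.
Variables (R : realType) (A : comAlgType R).

Definition is_derivation (d : A -> A) : Prop :=
  [/\ forall x y, d (x + y) = d x + d y,
      forall (c : R) x, d (c *: x) = c *: d x &
      forall x y, d (x * y) = d x * y + x * d y].

Inductive diffgen (d : A -> A) (G : A -> Prop) : A -> Prop :=
| dg_gen x : G x -> diffgen d G x
| dg_const (c : R) : diffgen d G (c%:A)
| dg_add x y : diffgen d G x -> diffgen d G y -> diffgen d G (x + y)
| dg_mul x y : diffgen d G x -> diffgen d G y -> diffgen d G (x * y)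
| dg_der x : diffgen d G x -> diffgen d G (d x).

Variables (N : nat) (eps : 'I_N -> R) (u : 'I_N -> A) (w : A) (d : A -> A).

(* local differential functions: differential polynomials in the u_k
   (k = 0..N-1) and w = u_0^{-1/2}; no ∂^{-1} *)
Definition local (a : A) : Prop :=
  diffgen d (fun x => (exists k, x = u k) \/ x = w) a.

Definition J (k : 'I_N) (a : A) : A :=
  (eps k / 4) *: d (d (d a)) + (2^-1 : R) *: (u k * d a + d (u k * a)).

(* One-forms: vectors indexed by 'I_N (component i+1 of the paper is index i).
   Rdag_rel g g' <-> g' = R^dagger g, i.e. (with R = A D^{-1},
   D = diag(1,..,1,J_N), J_N = -∂)  D^dagger g' = A^dagger g:
     g'_j = g_{j+1}  (j < N)   and   ∂ g'_N = \sum_{i=1}^N J_{i-1} g_i.     *)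
Definition Rdag_rel (g g' : 'I_N -> A) : Prop :=
  (forall j k : 'I_N, (k : nat) = j.+1 -> g' j = g k) /\
  (forall l : 'I_N, (l : nat) = N.-1 -> d (g' l) = \sum_(k < N) J k (g k)).

Definition gamma0 (j : 'I_N) : A := if (j : nat) == N.-1 then 2%:A else 0.
Definition gammam1 (j : 'I_N) : A := if (j : nat) == 0%N then w else 0.

End KdV.

(* The components of all the one-forms are read off one sequence (a_z)_{z ∈ Z}:
   γ_s(j) = a_{s+j+1-N}.  Extending by J_N = -∂ and J_m = 0 for m > N, the
   recursion γ_{s+1} = R^† γ_s becomes the Lenard relation
   Σ_{m ≤ N} J_m a_{τ+m-N} = 0 for τ ≠ 0, i.e. the vanishing of the coefficients
   of a product (Σ_k L_k λ^k)(Σ_j x_j λ^j) with L_k of the form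
   e/4 ∂^3 + 1/2 (v ∂ + ∂ v): for τ > 0 take L_k = J_{N-k} and x_j = a_j, for
   τ < 0 take L_k = J_k and x_j = a_{-N-j}.
   Each such L has a bilinear form B with ∂B(f,g) = f L g + g L f.  Hence if the
   quadratic series Σ B_k(x_i,x_j) λ^{i+j+k} has constant coefficients and x_0 is
   invertible, the product series vanishes.  The leading operator L_0 (-∂, resp.
   J_0) has no ∂^3 term, so the λ^n coefficient of the quadratic series is
   2 v_0 x_0 x_n plus a differential polynomial in x_0, ..., x_{n-1}; solving it
   for x_n makes it vanish and keeps every x_n a differential polynomial in the
   u_k and x_0 (= 2, resp. u_0^{-1/2}). *)

From mathcomp Require Import all_boot all_order all_algebra.
From mathcomp Require Import reals.
From mathcomp Require Import ring zify.
From Stdlib Require Import FunctionalExtensionality.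
Import Order.TTheory GRing.Theory Num.Theory.
Local Open Scope ring_scope.
Set Implicit Arguments. Unset Strict Implicit. Unset Printing Implicit Defensive.

Section OrdinalSums.
Variable V : nmodType.

Lemma sum_ord_rev_le n i (F : nat -> V) : (i <= n)%N ->
  \sum_(j < n.+1 | (i + j <= n)%N) F j = \sum_(k < (n - i).+1) F (n - i - k)%N.
Proof.
move=> le_in; rewrite [RHS](reindex_inj rev_ord_inj) /=.
under [RHS]eq_bigr => k _ do rewrite subKn ?leq_ord //.
rewrite (big_ord_widen n.+1 F) ?ltnS ?leq_subr //.
by apply: eq_bigl => j; lia.
Qed.

Lemma eq_sum_ord_pad n1 n2 (F : 'I_n1 -> V) (G : 'I_n2 -> V) :
  (forall (i : 'I_n1) (j : 'I_n2), i = j :> nat -> F i = G j) ->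
  (forall i : 'I_n1, (n2 <= i)%N -> F i = 0) ->
  (forall j : 'I_n2, (n1 <= j)%N -> G j = 0) ->
  \sum_(i < n1) F i = \sum_(j < n2) G j.
Proof.
move=> FG F0 G0.
pose pad n (H : 'I_n -> V) k := if (insub k : option 'I_n) is Some i then H i else 0.
have padE n (H : 'I_n -> V) : (n <= n1 + n2)%N ->
    \sum_(i < n) H i = \sum_(k < n1 + n2) pad n H k.
  move=> le_n; transitivity (\sum_(i < n) pad n H i).
    by apply: eq_bigr => i _; rewrite /pad valK.
  rewrite (big_ord_widen _ (pad n H) le_n) big_mkcond; apply: eq_bigr => k _.
  by rewrite /pad; case: ltnP => // le_nk; rewrite insubN // -leqNgt.
rewrite padE ?leq_addr // [RHS]padE ?leq_addl //; apply: eq_bigr => k _.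
rewrite /pad; case: insubP => [i _ eq_ik|]; case: insubP => [j _ eq_jk|] //=.
- by apply: FG; rewrite eq_ik eq_jk.
- by rewrite -leqNgt -eq_ik => /F0.
- by rewrite -leqNgt -eq_jk => /G0.
Qed.

End OrdinalSums.

Section Derivation.
Variables (R : realType) (A : comAlgType R) (d : A -> A).
Hypothesis derd : is_derivation d.

Lemma derD x y : d (x + y) = d x + d y. Proof. by case: derd. Qed.
Lemma derZ (c : R) x : d (c *: x) = c *: d x. Proof. by case: derd. Qed.
Lemma derM x y : d (x * y) = d x * y + x * d y. Proof. by case: derd. Qed.
Lemma der0 : d 0 = 0. Proof. by rewrite -{1}(scale0r (0 : A)) derZ scale0r. Qed.
Lemma derN x : d (- x) = - d x. Proof. by rewrite -scaleN1r derZ scaleN1r. Qed.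

Lemma der1 : d 1 = 0.
Proof. by apply: (addrI (d 1)); rewrite addr0 -{3}[1]mulr1 derM mulr1 mul1r. Qed.

Lemma der_alg (c : R) : d c%:A = 0. Proof. by rewrite derZ der1 scaler0. Qed.

Lemma der_sum (I : Type) (r : seq I) (P : pred I) (F : I -> A) :
  d (\sum_(i <- r | P i) F i) = \sum_(i <- r | P i) d (F i).
Proof. by elim/big_rec2: _ => [|i y1 y2 _ <-]; [exact: der0 | exact: derD]. Qed.

Lemma half_add_half : (2^-1 + 2^-1 : R) = 1. Proof. by field. Qed.

Definition kdv_op (e : R) (v f : A) : A :=
  (e / 4) *: d (d (d f)) + 2^-1 *: (v * d f + d (v * f)).

Definition kdv_form (e : R) (v f g : A) : A :=
  (e / 4) *: (f * d (d g) + d (d f) * g - d f * d g) + v * f * g.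

Lemma der_kdv_form e v f g :
  d (kdv_form e v f g) = f * kdv_op e v g + g * kdv_op e v f.
Proof.
pose E : A := (e / 4)%:A; pose h : A := (2^-1 : R)%:A.
have scaleE x : (e / 4) *: x = E * x by rewrite mulr_algl.
have scaleh x : 2^-1 *: x = h * x by rewrite mulr_algl.
have hh : h + h = 1 by rewrite /h -scalerDl half_add_half scale1r.
rewrite /kdv_form /kdv_op -[v * f * g]mul1r -hh !scaleE !scaleh.
have [dE dh] : d E = 0 /\ d h = 0 by split; apply: der_alg.
rewrite !(derD, derN, derM) dE dh; clearbody E h; ring.
Qed.

Lemma kdv_op0 e v : kdv_op e v 0 = 0.
Proof. by rewrite /kdv_op !der0 mulr0 der0 addr0 !scaler0 addr0. Qed.

Lemma kdv_op00 f : kdv_op 0 0 f = 0.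
Proof. by rewrite /kdv_op mul0r scale0r !mul0r der0 add0r addr0 scaler0. Qed.

Lemma kdv_op0N1 f : kdv_op 0 (-1) f = - d f.
Proof.
by rewrite /kdv_op mul0r scale0r add0r !mulN1r derN -opprD scalerN scalerDr
  -scalerDl half_add_half scale1r.
Qed.

Lemma kdv_form0 v f g : kdv_form 0 v f g = v * f * g.
Proof. by rewrite /kdv_form mul0r scale0r add0r. Qed.

End Derivation.

Section DiffSubalgebra.
Variables (R : realType) (A : comAlgType R) (d : A -> A) (G : A -> Prop).
Local Notation gen := (diffgen d G).

Lemma diffgen0 : gen 0.
Proof. by rewrite -(scale0r 1); apply: dg_const. Qed.

Lemma diffgenZ (c : R) a : gen a -> gen (c *: a).
Proof. by move=> ga; rewrite -mulr_algl; apply: dg_mul => //; apply: dg_const. Qed.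

Lemma diffgenN a : gen a -> gen (- a).
Proof. by rewrite -scaleN1r; apply: diffgenZ. Qed.

Lemma diffgen_sum (I : Type) (r : seq I) (P : pred I) (F : I -> A) :
  (forall i, gen (F i)) -> gen (\sum_(i <- r | P i) F i).
Proof. by move=> genF; elim/big_rec: _ => [|i y _ gy]; [exact: diffgen0 | exact: dg_add]. Qed.

Lemma diffgen_kdv_form (e : R) v f g :
  gen v -> gen f -> gen g -> gen (kdv_form d e v f g).
Proof.
move=> gv gf gg; rewrite /kdv_form; apply: dg_add; last by apply: dg_mul => //; apply: dg_mul.
apply: diffgenZ; apply: dg_add; first apply: dg_add.
- by apply: dg_mul => //; do 2 apply: dg_der.
- by apply: dg_mul => //; do 2 apply: dg_der.
- by apply: diffgenN; apply: dg_mul; apply: dg_der.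
Qed.

End DiffSubalgebra.

Section Pencil.
Variables (R : realType) (A : comAlgType R) (d : A -> A).
Hypothesis derd : is_derivation d.
Variables (e : nat -> R) (v : nat -> A).

(* With L_k := kdv_op (e k) (v k) and B_k := kdv_form (e k) (v k),
   [pencil_coef x n] is the coefficient of λ^n in (Σ_k L_k λ^k)(Σ_j x_j λ^j)
   and [pencil_form x n] that of Σ_{i,j,k} B_k(x_i, x_j) λ^(i+j+k). *)
Definition pencil_coef (x : nat -> A) n :=
  \sum_(k < n.+1) kdv_op d (e k) (v k) (x (n - k)%N).

Definition pencil_form (x : nat -> A) n :=
  \sum_(i < n.+1) \sum_(j < n.+1 | (i + j <= n)%N)
    kdv_form d (e (n - i - j)%N) (v (n - i - j)%N) (x i) (x j).

Lemma der_pencil_form x n :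
  d (pencil_form x n) = (\sum_(i < n.+1) x i * pencil_coef x (n - i)%N) *+ 2.
Proof.
rewrite /pencil_form (der_sum derd); under eq_bigr do rewrite (der_sum derd).
under eq_bigr do under eq_bigr do rewrite (der_kdv_form derd).
under eq_bigr do rewrite big_split /=.
have row i : (i < n.+1)%N ->
    \sum_(j < n.+1 | (i + j <= n)%N) x i * kdv_op d (e (n - i - j)%N) (v (n - i - j)%N) (x j)
    = x i * pencil_coef x (n - i)%N.
  rewrite ltnS => le_in; rewrite /pencil_coef mulr_sumr.
  rewrite (sum_ord_rev_le (fun j => x i * kdv_op d (e (n - i - j)%N) (v (n - i - j)%N) (x j))) //.
  by apply: eq_bigr => k _; rewrite subKn ?leq_ord.
rewrite big_split /= mulr2n; congr (_ + _); first by apply: eq_bigr => i _; apply: row.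
rewrite (exchange_big_dep xpredT) //=; apply: eq_bigr => j _; rewrite -row //.
by apply: eq_big => [i|i _]; rewrite 1?addnC // subnAC.
Qed.

Lemma pencil_coef_eq0 x c : c * x 0%N = 1 ->
  (forall n, d (pencil_form x n) = 0) -> forall n, pencil_coef x n = 0.
Proof.
move=> cx0 dform; elim/ltn_ind => n IH.
have := dform n; rewrite der_pencil_form -scaler_nat => /eqP.
rewrite scaler_eq0 pnatr_eq0 /= big_ord_recl big1 ?addr0 => [|i _]; last first.
  by rewrite IH ?mulr0 // lift0; have := ltn_ord i; lia.
rewrite subn0 => /eqP sum0.
by rewrite -[pencil_coef x n]mul1r -cx0 -mulrA sum0 mulr0.
Qed.

Section Solution.
Hypothesis e0 : e 0%N = 0.

Definition pencil_form_lower (x : nat -> A) n :=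
  \sum_(i < n) \sum_(j < n | (i + j <= n)%N)
    kdv_form d (e (n - i - j)%N) (v (n - i - j)%N) (x i) (x j).

Lemma pencil_form_split x n : (0 < n)%N ->
  pencil_form x n = (v 0%N * x 0%N * x n) *+ 2 + pencil_form_lower x n.
Proof.
case: n => // n _; rewrite /pencil_form big_ord_recr /=.
(* x_n only occurs in the terms (i, j) = (n, 0) and (0, n). *)
have only0 m k (F : 'I_m.+1 -> A) : \sum_(j < m.+1 | (k + j <= k)%N) F j = F ord0.
  by rewrite (big_pred1 ord0) // => j; rewrite -{2}[k]addn0 leq_add2l leqn0.
rewrite only0 /= subnn sub0n e0 kdv_form0.
under eq_bigr => i _ do rewrite big_mkcond big_ord_recr /=.
rewrite big_split /= -big_mkcond.
under [X in _ + X + _]eq_bigl do rewrite addnC.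
rewrite only0 /= subn0 subnn e0 kdv_form0.
under eq_bigr do rewrite -big_mkcond /=.
rewrite -/(pencil_form_lower x n.+1); ring.
Qed.

Lemma pencil_form_lower_ext x y n : (forall i, (i < n)%N -> x i = y i) ->
  pencil_form_lower x n = pencil_form_lower y n.
Proof. by move=> xy; apply: eq_bigr => i _; apply: eq_bigr => j _; rewrite !xy. Qed.

Variables (x0 c : A).

(* [pencil_prefix n] holds x_0, ..., x_n, where x_0 = x0 and x_n is -c times the
   lower part of the λ^n coefficient; by [pencil_form_split] this kills that
   coefficient once 2 v_0 x0 c = 1. *)
Fixpoint pencil_prefix n : nat -> A :=
  if n is m.+1 then fun i =>
    if i == m.+1 then - (c * pencil_form_lower (pencil_prefix m) m.+1)
    else pencil_prefix m i
  else fun=> x0.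

Definition pencil_seq n := pencil_prefix n n.

Lemma pencil_prefixE n i : (i <= n)%N -> pencil_prefix n i = pencil_seq i.
Proof.
elim: n => [|n IH] lein; first by move: lein; rewrite leqn0 => /eqP->.
rewrite /=; case: eqP => [->|ne_in]; first by rewrite /pencil_seq /= eqxx.
by apply: IH; lia.
Qed.

Lemma pencil_seqS n : pencil_seq n.+1 = - (c * pencil_form_lower pencil_seq n.+1).
Proof.
rewrite {1}/pencil_seq /= eqxx; congr (- (c * _)).
by apply: pencil_form_lower_ext => i ltin; apply: pencil_prefixE.
Qed.

Hypothesis normalized_c : (v 0%N * x0 * c) *+ 2 = 1.

Lemma pencil_form_seq n : (0 < n)%N -> pencil_form pencil_seq n = 0.
Proof.
case: n => // n _; rewrite pencil_form_split // pencil_seqS.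
rewrite (_ : pencil_seq 0 = x0) //.
transitivity (pencil_form_lower pencil_seq n.+1 * (1 - (v 0%N * x0 * c) *+ 2)); first by ring.
by rewrite normalized_c subrr mulr0.
Qed.

Lemma pencil_form_seq0 : pencil_form pencil_seq 0 = v 0%N * x0 * x0.
Proof. by rewrite /pencil_form !big_ord1 big_mkcond big_ord1 /= e0 kdv_form0. Qed.

Lemma pencil_coef_seq c' : c' * x0 = 1 -> d (v 0%N * x0 * x0) = 0 ->
  forall n, pencil_coef pencil_seq n = 0.
Proof.
move=> c'x0 const0; apply: (pencil_coef_eq0 c'x0) => -[|n].
  by rewrite pencil_form_seq0.
by rewrite pencil_form_seq // der0.
Qed.

Lemma diffgen_pencil_seq G : (forall k, diffgen d G (v k)) ->
  diffgen d G x0 -> diffgen d G c -> forall n, diffgen d G (pencil_seq n).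
Proof.
move=> Gv Gx0 Gc n; suff Gprefix m i : diffgen d G (pencil_prefix m i) by apply: Gprefix.
elim: m i => [|m IH] i //=; case: ifP => _ //; apply: diffgenN; apply: dg_mul => //.
by do 2 (apply: diffgen_sum => ?); apply: diffgen_kdv_form.
Qed.
End Solution.
End Pencil.

Section CoupledKdV.
Variables (R : realType) (A : comAlgType R) (N : nat) (eps : 'I_N -> R)
  (u : 'I_N -> A) (w : A) (d : A -> A).
Hypotheses (N_gt0 : (0 < N)%N) (eps0 : forall k : 'I_N, (k : nat) = 0%N -> eps k = 0)
  (derd : is_derivation d)
  (w2u0 : forall k : 'I_N, (k : nat) = 0%N -> w ^+ 2 * u k = 1).

(* Coefficients of J_m for every m : nat: J_N = -∂ and J_m = 0 for m > N. *)
Definition eps_ext (m : nat) : R := if (insub m : option 'I_N) is Some k then eps k else 0.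
Definition u_ext (m : nat) : A :=
  if (insub m : option 'I_N) is Some k then u k else if m == N then -1 else 0.
Local Notation J_ext m := (kdv_op d (eps_ext m) (u_ext m)).

Lemma J_extE (k : 'I_N) f : J_ext k f = J eps u d k f.
Proof. by rewrite /eps_ext /u_ext valK. Qed.

Lemma J_ext_N f : J_ext N f = - d f.
Proof. by rewrite /eps_ext /u_ext insubN ?ltnn // eqxx kdv_op0N1. Qed.

Lemma J_ext_gt m f : (N < m)%N -> J_ext m f = 0.
Proof.
move=> ltNm; rewrite /eps_ext /u_ext insubN -?leqNgt ?(ltnW ltNm) //.
by rewrite ifN ?kdv_op00 // neq_ltn ltNm orbT.
Qed.

Let i0 : 'I_N := Ordinal N_gt0.

Lemma eps_ext0 : eps_ext 0 = 0.
Proof. by rewrite -[0%N]/(val i0) /eps_ext valK eps0. Qed.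

Lemma u_ext0 : u_ext 0 = u i0.
Proof. by rewrite -[0%N]/(val i0) /u_ext valK. Qed.

Definition rev_eps k : R := if (k <= N)%N then eps_ext (N - k) else 0.
Definition rev_u k : A := if (k <= N)%N then u_ext (N - k) else 0.

Lemma kdv_op_rev k f :
  kdv_op d (rev_eps k) (rev_u k) f = if (k <= N)%N then J_ext (N - k) f else 0.
Proof. by rewrite /rev_eps /rev_u; case: ifP; rewrite ?kdv_op00. Qed.

Lemma mul_alg (r s : R) : r%:A * s%:A = (r * s)%:A :> A.
Proof. by rewrite mulr_algl scalerA. Qed.

Definition pos_seq := pencil_seq d rev_eps rev_u 2%:A (- 4^-1)%:A.
Definition neg_seq := pencil_seq d eps_ext u_ext w (2^-1 *: w).

Lemma pencil_coef_pos n : pencil_coef d rev_eps rev_u pos_seq n = 0.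
Proof.
have rev_u0 : rev_u 0 = (-1 : R)%:A.
  by rewrite /rev_u subn0 /u_ext insubN ?ltnn // eqxx scaleN1r.
apply: (pencil_coef_seq derd _ _ (c' := (2^-1 : R)%:A)).
- by rewrite /rev_eps subn0 /eps_ext insubN ?ltnn.
- by rewrite rev_u0 !mul_alg -scaler_nat scalerA -[RHS]scale1r; congr (_ *: _); field.
- by rewrite mul_alg -[RHS]scale1r; congr (_ *: _); field.
- by rewrite rev_u0 !mul_alg der_alg.
Qed.

Lemma pencil_coef_neg n : pencil_coef d eps_ext u_ext neg_seq n = 0.
Proof.
have u0w2 : u i0 * w * w = 1 by rewrite -(w2u0 (k := i0)) //; ring.
apply: (pencil_coef_seq derd _ _ (c' := w * u i0)); rewrite ?u_ext0.
- exact: eps_ext0.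
- by rewrite -scalerAr u0w2 scalerMnl -mulr_natr mulVf ?pnatr_eq0 // scale1r.
- by rewrite -u0w2 [w * _]mulrC.
- by rewrite u0w2 -(scale1r 1) der_alg.
Qed.

Definition gamma_seq (z : int) : A :=
  if 0 <= z then pos_seq `|z|%N
  else if z <= - N%:Z then neg_seq (`|z| - N)%N else 0.

Lemma gamma_seq_nat n : gamma_seq n%:Z = pos_seq n.
Proof. by []. Qed.

Lemma gamma_seq_neg n : gamma_seq (- (N + n)%:Z) = neg_seq n.
Proof. by rewrite /gamma_seq ifF ?ifT; [congr neg_seq | |]; lia. Qed.

Lemma gamma_seq_gap z : - N%:Z < z < 0 -> gamma_seq z = 0.
Proof. by move=> /andP[ltNz ltz0]; rewrite /gamma_seq ifF ?ifF //; lia. Qed.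

Lemma lenard_pos t : (0 < t)%N ->
  \sum_(m < N.+1) J_ext m (gamma_seq (t%:Z + m%:Z - N%:Z)) = 0.
Proof.
move=> t_gt0; rewrite -[RHS](pencil_coef_pos t) /pencil_coef.
rewrite (reindex_inj rev_ord_inj) /=.
apply: eq_sum_ord_pad => [i j /= eq_ij|i /= lt_ti|j /= lt_Nj].
- have [lt_iN lt_jt] := (ltn_ord i, ltn_ord j).
  rewrite kdv_op_rev -eq_ij subSS ifT -?gamma_seq_nat; last by lia.
  by congr (J_ext _ (gamma_seq _)); lia.
- by rewrite gamma_seq_gap ?kdv_op0 //; have := ltn_ord i; lia.
- by rewrite kdv_op_rev ifN // -ltnNge.
Qed.

Lemma lenard_neg r : (0 < r)%N ->
  \sum_(m < N.+1) J_ext m (gamma_seq (m%:Z - (r + N)%:Z)) = 0.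
Proof.
move=> r_gt0; rewrite -[RHS](pencil_coef_neg r) /pencil_coef.
apply: eq_sum_ord_pad => [i j /= eq_ij|i /= lt_ri|j /= lt_Nj].
- by rewrite eq_ij -gamma_seq_neg; congr (J_ext _ (gamma_seq _)); have := ltn_ord j; lia.
- by rewrite gamma_seq_gap ?kdv_op0 //; have := ltn_ord i; lia.
- by rewrite J_ext_gt.
Qed.

Lemma lenard_rel (tau : int) : tau != 0 ->
  \sum_(m < N.+1) J_ext m (gamma_seq (tau + m%:Z - N%:Z)) = 0.
Proof.
case: tau => [[|t]|r] // _; first exact: lenard_pos.
rewrite -[RHS](lenard_neg (r := r.+1)) //; apply: eq_bigr => m _.
by congr (J_ext _ (gamma_seq _)); rewrite NegzE; lia.
Qed.

Definition gamma (s : int) (j : 'I_N) : A := gamma_seq (s + j%:Z + 1 - N%:Z).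

Lemma Rdag_rel_gamma (s : int) : s != -1 -> Rdag_rel eps u d (gamma s) (gamma (s + 1)).
Proof.
move=> s_neq; split => [j k eq_kj|l eq_l]; first by rewrite /gamma; congr gamma_seq; lia.
have s1_neq0 : s + 1 != 0 by lia.
have /eqP := lenard_rel s1_neq0; rewrite big_ord_recr /= J_ext_N subr_eq0 => /eqP sum_eq.
rewrite /gamma (_ : s + 1 + l%:Z + 1 - N%:Z = s + 1 + N%:Z - N%:Z); last by lia.
rewrite -sum_eq; apply: eq_bigr => k _; rewrite J_extE.
by congr (J _ _ _ _ (gamma_seq _)); lia.
Qed.

Lemma gamma_0 : gamma 0 = @gamma0 R A N.
Proof.
apply: functional_extensionality => j; rewrite /gamma /gamma0.
case: eqP => [->|ne_j].
  by rewrite (_ : _ - _ = 0%:Z) //; lia.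
by rewrite gamma_seq_gap //; have := ltn_ord j; lia.
Qed.

Lemma gamma_m1 : gamma (-1) = @gammam1 R A N w.
Proof.
apply: functional_extensionality => j; rewrite /gamma /gammam1.
case: eqP => [j0|ne_j].
  by rewrite -[RHS](gamma_seq_neg 0); congr gamma_seq; lia.
by rewrite gamma_seq_gap //; have := ltn_ord j; lia.
Qed.

Lemma local_gamma s j : local u w d (gamma s j).
Proof.
have gen_u m : local u w d (u_ext m).
  rewrite /u_ext; case: insubP => [k _ _|_]; first by apply: dg_gen; left; exists k.
  case: eqP => _; last exact: diffgen0.
  by apply: diffgenN; rewrite -(scale1r 1); apply: dg_const.
have gen_w : local u w d w by apply: dg_gen; right.
rewrite /gamma /gamma_seq; case: ifP => _; last case: ifP => _; last exact: diffgen0.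
- apply: diffgen_pencil_seq; try exact: dg_const.
  by move=> k; rewrite /rev_u; case: ifP => _; [exact: gen_u | exact: diffgen0].
- by apply: diffgen_pencil_seq => //; exact: diffgenZ.
Qed.

End CoupledKdV.

Theorem mainTheorem7 (R : realType) (A : comAlgType R) (N : nat)
  (eps : 'I_N -> R) (u : 'I_N -> A) (w : A) (d : A -> A) :
  (0 < N)%N ->
  (forall k : 'I_N, (k : nat) = 0%N -> eps k = 0) ->
  is_derivation d ->
  (forall k : 'I_N, (k : nat) = 0%N -> w ^+ 2 * u k = 1) ->
  exists gamma : int -> 'I_N -> A,
    [/\ gamma 0 = @gamma0 R A N,
        gamma (-1) = @gammam1 R A N w,
        (forall s : nat,
            Rdag_rel eps u d (gamma s%:Z) (gamma (s.+1)%:Z)),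
        (forall s : nat,
            Rdag_rel eps u d (gamma (- (s.+2)%:Z)) (gamma (- (s.+1)%:Z))) &
        (forall (s : int) (i : 'I_N), local u w d (gamma s i))].
Proof.
move=> N_gt0 eps0 derd w2u0.
have shift := Rdag_rel_gamma N_gt0 eps0 derd w2u0.
exists (gamma eps u w d); split.
- exact: gamma_0.
- exact: gamma_m1.
- by move=> s; rewrite (_ : s.+1%:Z = s%:Z + 1); [apply: shift | ]; lia.
- by move=> s; rewrite (_ : - s.+1%:Z = - s.+2%:Z + 1); [apply: shift | ]; lia.
- exact: local_gamma.
Qed.
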